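(* Let $\mathcal M$ be an oriented matroid program of rank $r$ on $[n]\cup\{f,g\}$ with digraph $K_f$, and let $\tilde v$ be a node of $K_f$ that is neither the source nor the sink of $K_f$. Then for each $e\in\tilde v$ there is a cocircuit $Y^{e}$ of $\mathcal M/\{f,g\}$ with $Y^{e}_e=+$ and $Y^e_{e'}\in\{+,0\}$ for all $e'\in\tilde v$. Consequently the composition of the $Y^e$, $e\in\tilde v$, is a covector of $\mathcal M/\{f,g\}$ that is positive on every element of $\tilde v$.
   Context: Oriented matroid conventions: covectors, cocircuits, vectors, circuits, deletion $\setminus$, contraction $/$, rank are as usual; $\underline Y$ is the support; composition $(X\circ Y)_e=X_e$ if $X_e\ne0$, else $Y_e$. A covector is nonnegative if all entries are in $\{+,0\}$. Oriented matroid program: $\mathcal M$ is an oriented matroid of rank $r$ on $E=[n]\cup\{f,g\}$ such that (a) every nonnegative cocircuit $Y$ of $\mathcal M\setminus f$ has $Y_g\neq 0$; (b) for every $e\in[n]$ there is a nonnegative cocircuit $Y$ of $\mathcal M\setminus f$ with $Y_e=+$; (c) every circuit of $\mathcal M$ whose support contains $f$ has support of size $r+1$. Nodes: the sets $v=[n]\setminus\underline Y$, $Y$ a nonnegative cocircuit of $\mathcal M\setminus f$. For each node $v$ let $Y^v$ be the cocircuit of $\mathcal M$ that is nonnegative on $E\setminus\{f\}$, has $Y^v_f\neq0\neq Y^v_g$, and zero set $v$ in $[n]$. Distinct nodes $v,v'$ are adjacent if $v\cap v'$ has rank $r-2$ in $\mathcal M$. For adjacent $v,v'$, let $Y''$ be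 the cocircuit of $\mathcal M$ obtained by eliminating $g$ between $Y^v$ and $-Y^{v'}$; it has $Y''_g=0$, vanishes on $v\cap v'$, is $+$ on $v'\setminus v$, $-$ on $v\setminus v'$, and $Y''_f\ne 0$. $K_f$: arc from $v$ to $v'$ if $Y''_f=Y''_e$ for $e\in v\setminus v'$, otherwise from $v'$ to $v$; it has a unique source and a unique sink. *)

From HB Require Import structures.
From mathcomp Require Import all_boot.
Set Implicit Arguments. Unset Strict Implicit. Unset Printing Implicit Defensive.

Inductive sign := Zero | Pos | Neg.

Definition sign_code (s : sign) : 'I_3 :=
  match s with Zero => inord 0 | Pos => inord 1 | Neg => inord 2 end.
Definition sign_decode (i : 'I_3) : sign :=
  match val i with 0 => Zero | 1 => Pos | _ => Neg end.
Lemma sign_codeK : cancel sign_code sign_decode.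
Proof. by case; rewrite /sign_decode /= inordK. Qed.
HB.instance Definition _ := Finite.copy sign (can_type sign_codeK).

Definition sopp (s : sign) : sign :=
  match s with Zero => Zero | Pos => Neg | Neg => Pos end.
Definition smul (s t : sign) : sign :=
  match s, t with
  | Zero, _ | _, Zero => Zero
  | Pos, Pos | Neg, Neg => Pos
  | _, _ => Neg end.

Section SignVectors.
Variable E : finType.

Definition svec := {ffun E -> sign}.

Definition szero : svec := [ffun _ => Zero].
Definition sneg (X : svec) : svec := [ffun e => sopp (X e)].
Definition compose (X Y : svec) : svec :=
  [ffun e => if X e == Zero then Y e else X e].
Definition supp (X : svec) : {set E} := [set e | X e != Zero].
(** restriction to E \ A, represented by zeroing the entries in A *)
Definition restr (A : {set E}) (X : svec) : svec :=
  [ffun e => if e \in A then Zero else X e].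
Definition nonneg (X : svec) : bool := [forall e, X e != Neg].

(** Cocircuit axioms for an oriented matroid on E (Bjorner et al., 3.2.1,
    applied to the set of cocircuits). *)
Definition is_OM (C : {set svec}) : Prop :=
  [/\ szero \notin C,
      forall X, X \in C -> sneg X \in C,
      forall X Y, X \in C -> Y \in C -> supp X \subset supp Y ->
                  X = Y \/ X = sneg Y &
      forall X Y e, X \in C -> Y \in C -> X != sneg Y ->
        X e = Pos -> Y e = Neg ->
        exists2 Z, Z \in C &
          Z e = Zero /\
          forall x, (Z x = Pos -> X x = Pos \/ Y x = Pos) /\
                    (Z x = Neg -> X x = Neg \/ Y x = Neg)].

Definition covector (C : {set svec}) (X : svec) : Prop :=
  exists2 s : seq svec, all (fun Y => Y \in C) s & X = foldr compose szero s.

Definition orth (X Y : svec) : bool :=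
  (supp X :&: supp Y == set0) ||
  ([exists e, smul (X e) (Y e) == Pos] && [exists e, smul (X e) (Y e) == Neg]).

Definition is_vector (C : {set svec}) (X : svec) : bool :=
  [forall Y in C, orth X Y].
Definition circuits (C : {set svec}) : {set svec} :=
  [set X | [&& X != szero, is_vector C X &
     [forall Y, ((Y != szero) && is_vector C Y && (supp Y \subset supp X))
                 ==> (supp Y == supp X)]]].

Definition indep (C : {set svec}) (B : {set E}) : bool :=
  [forall X in circuits C, ~~ (supp X \subset B)].
Definition rank (C : {set svec}) (A : {set E}) : nat :=
  \max_(B : {set E} | (B \subset A) && indep C B) #|B|.

Definition deletion (C : {set svec}) (A : {set E}) : {set svec} :=
  let R := [set restr A Y | Y in C] in
  [set X in R | (X != szero) &&
     [forall Y in R, ((Y != szero) && (supp Y \subset supp X))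
                      ==> (supp Y == supp X)]].

Definition contraction (C : {set svec}) (A : {set E}) : {set svec} :=
  [set Y in C | [forall e in A, Y e == Zero]].

End SignVectors.

Section Program.
Variables (E : finType) (f g : E) (C : {set svec E}) (r : nat).

Definition ground_n : {set E} := [set e | (e != f) && (e != g)].

Definition del_f : {set svec E} := deletion C [set f].

Definition OM_program : Prop :=
  [/\ is_OM C, rank C setT = r,
      forall Y, Y \in del_f -> nonneg Y -> Y g != Zero,
      forall e, e \in ground_n ->
                  exists2 Y, Y \in del_f & nonneg Y /\ Y e = Pos &
      forall X, X \in circuits C -> f \in supp X ->
                  #|supp X| = r.+1].

Definition is_node (v : {set E}) : Prop :=
  exists2 Y, Y \in del_f & nonneg Y /\ v = ground_n :\: supp Y.

Definition is_Yv (v : {set E}) (Y : svec E) : Prop :=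
  [/\ Y \in C, forall e, e != f -> Y e != Neg, Y f != Zero, Y g != Zero &
      forall e, e \in ground_n -> (Y e == Zero) = (e \in v)].

Definition adjacent (v v' : {set E}) : Prop :=
  [/\ is_node v, is_node v', v != v' & rank C (v :&: v') = r - 2].

Definition is_elim (X Y Z : svec E) : Prop :=
  [/\ Z \in C, Z g = Zero &
      forall x, (Z x = Pos -> X x = Pos \/ Y x = Pos) /\
                (Z x = Neg -> X x = Neg \/ Y x = Neg)].

Definition arc_cond (v v' : {set E}) : Prop :=
  exists Yv Yv' Z, [/\ is_Yv v Yv, is_Yv v' Yv', is_elim Yv (sneg Yv') Z &
                       forall e, e \in v :\: v' -> Z f = Z e].

(** arcs of K_f: for adjacent v, v', arc v -> v' if the test holds for
    (v, v'), otherwise v' -> v *)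
Definition arc (v v' : {set E}) : Prop :=
  adjacent v v' /\ (arc_cond v v' \/ ~ arc_cond v' v).

Definition is_source (v : {set E}) : Prop :=
  is_node v /\ forall w, ~ arc w v.
Definition is_sink (v : {set E}) : Prop :=
  is_node v /\ forall w, ~ arc v w.

End Program.

(* For e in the node v, condition (b) gives a cocircuit X, nonnegative off f,
   with X_e = X_g = +, while the cocircuit Y^v vanishes on v and has Y^v_g = +.
   Strongly eliminating g between X and -Y^v while keeping e yields a cocircuit
   Z with Z_g = 0, Z_e = + and Z >= 0 on v.  If Z_f <> 0, an arc of K_f
   entering v (when Z_f = +) or leaving v (when Z_f = -) provides a cocircuit W
   with W_g = 0, W_f = -Z_f and W >= 0 on v: the rank conditions defining
   adjacency force the sign pattern of the eliminant Y'' of the arc.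
   Eliminating f between Z and W while keeping e gives the required cocircuit
   of M/{f,g}.  Strong elimination is derived from the weak elimination axiom
   by induction on the size of the joint support. *)

From Pilot Require Import Defs.
From mathcomp Require Import all_boot.
From Stdlib Require Import Classical.

Set Implicit Arguments. Unset Strict Implicit. Unset Printing Implicit Defensive.

Definition sign_eqb (s t : sign) : bool :=
  match s, t with Zero, Zero | Pos, Pos | Neg, Neg => true | _, _ => false end.

(* The equality on [sign] inherited from ['I_3] does not reduce on constructors. *)
Lemma sign_eqE s t : (s == t) = sign_eqb s t.
Proof. by apply/eqP/idP; case: s; case: t. Qed.

Lemma soppK : involutive sopp. Proof. by case. Qed.

Lemma sopp_eq0 s : (sopp s == Zero) = (s == Zero).
Proof. by rewrite !sign_eqE; case: s. Qed.

Lemma sopp_eq_self s : (sopp s == s) = (s == Zero).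
Proof. by rewrite !sign_eqE; case: s. Qed.

Lemma smul_neq0 s t : (smul s t != Zero) = (s != Zero) && (t != Zero).
Proof. by rewrite !sign_eqE; case: s; case: t. Qed.

Lemma sign_not_opp p q : p != Zero -> q != sopp p -> q = Zero \/ q = p.
Proof. by rewrite !sign_eqE; case: p; case: q; auto. Qed.

Definition sign_from (p q v : sign) : bool := [|| v == Zero, v == p | v == q].

Lemma sign_fromP p q v :
  (v = Pos -> p = Pos \/ q = Pos) /\ (v = Neg -> p = Neg \/ q = Neg) <->
  sign_from p q v.
Proof. by rewrite /sign_from !sign_eqE; case: p; case: q; case: v; intuition. Qed.

Lemma sign_fromC p q v : sign_from p q v = sign_from q p v.
Proof. by rewrite /sign_from !sign_eqE; case: p; case: q; case: v. Qed.

Lemma sign_from_opp p q v : sign_from (sopp p) (sopp q) (sopp v) = sign_from p q v.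
Proof. by rewrite /sign_from !sign_eqE; case: p; case: q; case: v. Qed.

Lemma sign_from00 v : sign_from Zero Zero v -> v = Zero.
Proof. by rewrite /sign_from !sign_eqE; case: v. Qed.

Lemma sign_from0r p v : sign_from p Zero v -> v = Zero \/ v = p.
Proof. by rewrite /sign_from !sign_eqE; case: p; case: v; auto. Qed.

Lemma sign_from_supp p q v : sign_from p q v -> v != Zero -> (p != Zero) || (q != Zero).
Proof. by rewrite /sign_from !sign_eqE; case: p; case: q; case: v. Qed.

Lemma sign_from_nonneg p q v : sign_from p q v -> p != Neg -> q != Neg -> v != Neg.
Proof. by rewrite /sign_from !sign_eqE; case: p; case: q; case: v. Qed.

Lemma sign_from_opp_nonpos p q v : sign_from p (sopp q) v -> p != Pos -> q != Neg -> v != Pos.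
Proof. by rewrite /sign_from !sign_eqE; case: p; case: q; case: v. Qed.

Lemma sign_from_trans p q u z v :
  sign_from p q u -> sign_from p q z -> sign_from u z v -> sign_from p q v.
Proof. by rewrite /sign_from !sign_eqE; case: p; case: q; case: u; case: z; case: v. Qed.

Lemma sign_from_opp_supp p q u z :
  sign_from p q u || (u == sopp z) -> sign_from p q z -> u != Zero ->
  (p != Zero) || (q != Zero).
Proof. by rewrite /sign_from !sign_eqE; case: p; case: q; case: u; case: z. Qed.

Lemma sign_not_from p q u z :
  ~~ sign_from p q u -> sign_from p q u || (u == sopp z) -> (u != Zero) && (z == sopp u).
Proof. by rewrite /sign_from !sign_eqE; case: p; case: q; case: u; case: z. Qed.

Lemma sign_from_opp_trans p q u z v :
  sign_from p q u || (u == sopp z) -> sign_from p q z -> sign_from u z v ->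
  sign_from p q v || (v == sopp z).
Proof. by rewrite /sign_from !sign_eqE; case: p; case: q; case: u; case: z; case: v. Qed.

Lemma sign_from_escape p q z w v :
  sign_from q (sopp z) w -> sign_from p w v -> sign_from p q v || (v == sopp z).
Proof. by rewrite /sign_from !sign_eqE; case: p; case: q; case: z; case: w; case: v. Qed.

Section SignVectors.
Variable E : finType.
Implicit Types P Q U V W X Y Z : svec E.

Lemma snegE X x : sneg X x = sopp (X x). Proof. by rewrite ffunE. Qed.

Lemma snegK : involutive (@sneg E).
Proof. by move=> X; apply/ffunP => x; rewrite !snegE soppK. Qed.

Lemma in_supp X x : (x \in supp X) = (X x != Zero). Proof. by rewrite inE. Qed.

Lemma supp_sneg X : supp (sneg X) = supp X.
Proof. by apply/setP => x; rewrite !in_supp snegE sopp_eq0. Qed.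

Lemma supp_eq0 X : (supp X == set0) = (X == szero E).
Proof.
apply/eqP/eqP => [X0|->]; last by apply/setP => x; rewrite !inE ffunE eqxx.
by apply/ffunP => x; rewrite ffunE; apply/eqP/negbFE; rewrite -in_supp X0 inE.
Qed.

Definition signs_from P Q V := forall x, sign_from (P x) (Q x) (V x).

Lemma signs_from_sneg P Q V :
  signs_from P Q V -> signs_from (sneg P) (sneg Q) (sneg V).
Proof. by move=> sV x; rewrite !snegE sign_from_opp. Qed.

Lemma signs_from_eq0 P Q V x : signs_from P Q V -> P x = Zero -> Q x = Zero -> V x = Zero.
Proof. by move=> sV Px Qx; apply: sign_from00; rewrite -{1}Px -Qx. Qed.

Lemma supp_signs_from P Q V : signs_from P Q V -> supp V \subset supp P :|: supp Q.
Proof. by move=> sV; apply/subsetP => x; rewrite !inE; apply: sign_from_supp. Qed.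

Lemma card_supp2_lt P Q P' Q' x :
  supp P' :|: supp Q' \subset supp P :|: supp Q ->
  P' x = Zero -> Q' x = Zero -> x \in supp P :|: supp Q ->
  #|supp P' :|: supp Q'| < #|supp P :|: supp Q|.
Proof.
move=> sub P'x Q'x xPQ; apply/proper_card/properP; split => //.
by exists x; rewrite // !inE P'x Q'x eqxx.
Qed.

Lemma card_supp_escape_lt P Q Z W b :
  signs_from P Q Z -> signs_from Q (sneg Z) W ->
  P b = Zero -> W b = Zero -> Q b != Zero ->
  #|supp P :|: supp W| < #|supp P :|: supp Q|.
Proof.
move=> sZ sW Pb Wb Qb; apply: (card_supp2_lt (x := b)) => //; last by rewrite !inE Qb orbT.
rewrite subUset subsetUl; apply: subset_trans (supp_signs_from sW) _.
by rewrite supp_sneg subUset subsetUr (supp_signs_from sZ).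
Qed.

Lemma foldr_compose_pos (s : seq (svec E)) x :
  (forall Y, Y \in s -> Y x != Neg) -> (exists2 Y, Y \in s & Y x = Pos) ->
  foldr (@compose E) (szero E) s x = Pos.
Proof.
elim: s => [_ [] //|Y s IH] nn [Y0 Y0s Y0x] /=; rewrite ffunE.
have [Yx|Yx] := eqVneq (Y x) Zero; last first.
  by move: Yx (nn Y (mem_head _ _)); rewrite !sign_eqE; case: (Y x).
apply: IH => [Y' Y's|]; first by apply: nn; rewrite inE Y's orbT.
by move: Y0s; rewrite inE => /predU1P [eY0|]; [rewrite eY0 Yx in Y0x | exists Y0].
Qed.

Lemma positive_covector (D : {set svec E}) (A : {set E}) :
  (forall e, e \in A -> exists2 Y, Y \in D & Y e = Pos /\ {in A, forall x, Y x != Neg}) ->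
  exists Ye : E -> svec E,
    (forall e, e \in A ->
       [/\ Ye e \in D, Ye e e = Pos & forall e', e' \in A -> Ye e e' != Neg]) /\
    (covector D (foldr (@compose E) (szero E) [seq Ye e | e <- enum A]) /\
     forall e, e \in A -> foldr (@compose E) (szero E) [seq Ye e | e <- enum A] e = Pos).
Proof.
move=> exY; pose good e Y := [&& Y \in D, Y e == Pos & [forall x in A, Y x != Neg]].
pose Ye e := odflt (szero E) [pick Y | good e Y].
have YeP e : e \in A ->
    [/\ Ye e \in D, Ye e e = Pos & forall e', e' \in A -> Ye e e' != Neg].
  move=> eA; rewrite /Ye; case: pickP => [Y /and3P [YD /eqP Ye0 /forall_inP YA]|noY] //=.
  have [Y YD [Ye0 YA]] := exY e eA.
  have YA' : [forall x in A, Y x != Neg] by apply/forall_inP.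
  by move: (noY Y); rewrite /good YD Ye0 eqxx YA'.
exists Ye; split => //; split.
  exists [seq Ye e | e <- enum A] => //.
  by apply/allP => _ /mapP [e + ->]; rewrite mem_enum => /YeP [].
move=> e eA; apply: foldr_compose_pos => [_ /mapP [e' + ->]|].
  by rewrite mem_enum => /YeP [_ _]; apply.
by exists (Ye e); [apply: map_f; rewrite mem_enum | case: (YeP e eA)].
Qed.

End SignVectors.

Section StrongElimination.
Variables (E : finType) (C : {set svec E}).
Hypothesis C_OM : is_OM C.
Implicit Types P Q U V W X Y Z : svec E.

Lemma cocircuit_sneg X : X \in C -> sneg X \in C.
Proof. by case: C_OM => _ + _ _; apply. Qed.

Lemma cocircuit_supp_sub X Y :
  X \in C -> Y \in C -> supp X \subset supp Y -> X = Y \/ X = sneg Y.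
Proof. by case: C_OM => _ _ + _; apply. Qed.

Lemma weak_elim P Q a : P \in C -> Q \in C -> P != sneg Q ->
  P a != Zero -> Q a = sopp (P a) ->
  exists2 Z, Z \in C & Z a = Zero /\ signs_from P Q Z.
Proof.
case: C_OM => _ _ _ elim PC QC PQ; case Pa: (P a); rewrite ?eqxx //= => _ Qa.
  have [Z ZC [Za sZ]] := elim P Q a PC QC PQ Pa Qa.
  by exists Z => //; split => // x; apply/sign_fromP.
have QP : Q != sneg P by apply: contraNneq PQ => ->; rewrite snegK eqxx.
have [Z ZC [Za sZ]] := elim Q P a QC PC QP Qa Pa.
by exists Z => //; split => // x; rewrite sign_fromC; apply/sign_fromP.
Qed.

Lemma cocircuit_escape P Z a : P \in C -> Z \in C -> P a != Zero -> Z a = Zero ->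
  exists2 b, Z b != Zero & P b = Zero.
Proof.
move=> PC ZC Pa Za; have /subsetPn [b] : ~~ (supp Z \subset supp P).
  apply: contra Pa => /(cocircuit_supp_sub ZC PC) [] eZ.
    by rewrite -eZ Za.
  by rewrite -sopp_eq0 -snegE -eZ Za.
by rewrite !in_supp negbK => Zb /eqP Pb; exists b.
Qed.

Definition elim_keeping P Q a k :=
  exists2 V, V \in C & [/\ V a = Zero, V k != Zero & signs_from P Q V].

Lemma elim_or_escape P Q a k :
  P \in C -> Q \in C -> P a != Zero -> Q a = sopp (P a) ->
  P k != Zero -> Q k != sopp (P k) ->
  elim_keeping P Q a k \/
  exists Z b, [/\ Z \in C, Z a = Zero, Z k = Zero & signs_from P Q Z] /\
              [/\ P b = Zero, Q b != Zero & Z b = Q b].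
Proof.
move=> PC QC Pa Qa Pk Qk.
have PQ : P != sneg Q by apply: contraNneq Qk => ->; rewrite snegE soppK eqxx.
have [Z ZC [Za sZ]] := weak_elim PC QC PQ Pa Qa.
have [Zk|Zk] := eqVneq (Z k) Zero; last by left; exists Z.
have [b Zb Pb] := cocircuit_escape PC ZC Pa Za.
have := sZ b; rewrite Pb sign_fromC => /sign_from0r [Zb0|ZbQ].
  by rewrite Zb0 eqxx in Zb.
by right; exists Z, b; split; rewrite // -ZbQ.
Qed.

Definition strong_elim0_lt n := forall P Q a k,
  #|supp P :|: supp Q| < n -> P \in C -> Q \in C ->
  P a != Zero -> Q a = sopp (P a) -> P k != Zero -> Q k = Zero ->
  elim_keeping P Q a k.

(* The entries of U equal to -Z are removed one at a time by eliminating
   them against Z, which agrees with P or Q wherever it is nonzero. *)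
Lemma elim_repair n P Q Z a k :
  strong_elim0_lt n -> #|supp P :|: supp Q| <= n -> P a != Zero ->
  Z \in C -> Z a = Zero -> Z k = Zero -> signs_from P Q Z ->
  forall U, U \in C -> U a = Zero -> U k != Zero ->
    (forall x, sign_from (P x) (Q x) (U x) || (U x == sopp (Z x))) ->
  elim_keeping P Q a k.
Proof.
move=> IH szPQ Pa ZC Za Zk sZ U.
pose bad U := [set x | ~~ sign_from (P x) (Q x) (U x)].
have [m] := ubnP #|bad U|; elim: m U => // m IHm U ltUm UC Ua Uk sU.
have [bad0|[b]] := set_0Vmem (bad U); last rewrite inE => bUb.
  by exists U => //; split => // x; move: (in_set0 x); rewrite -bad0 inE => /negbFE.
have /andP [Ub /eqP ZbU] := sign_not_from bUb (sU b).
have szUZ : #|supp U :|: supp Z| < #|supp P :|: supp Q|.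
  apply: (card_supp2_lt (x := a)) => //; last by rewrite !inE Pa.
  rewrite subUset (supp_signs_from sZ) andbT.
  by apply/subsetP => x; rewrite !inE; apply: sign_from_opp_supp (sU x) (sZ x).
have [U' U'C [U'b U'k sU']] := IH U Z b k (leq_trans szUZ szPQ) UC ZC Ub ZbU Uk Zk.
apply: (IHm U') => //.
- rewrite -ltnS (leq_trans _ ltUm) // ltnS; apply/proper_card/properP; split.
    apply/subsetP => x; rewrite !inE; apply: contra => sUx.
    exact: sign_from_trans sUx (sZ x) (sU' x).
  by exists b; rewrite inE // U'b /sign_from eqxx.
- by apply: sign_from00; rewrite -{1}Ua -Za.
- by move=> x; apply: sign_from_opp_trans (sU x) (sZ x) (sU' x).
Qed.

Lemma elim_escape n P Q Z a b :
  strong_elim0_lt n -> #|supp Q :|: supp Z| < n ->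
  Q \in C -> Z \in C -> P a != Zero -> Q a = sopp (P a) -> Z a = Zero ->
  Q b != Zero -> Z b = Q b ->
  exists2 W, W \in C & [/\ W b = Zero, W a = sopp (P a) & signs_from Q (sneg Z) W].
Proof.
move=> IH szQZ QC ZC Pa Qa Za Qb ZbQ.
have [W WC [Wb Wa sW]] : elim_keeping Q (sneg Z) b a.
  by apply: IH; rewrite ?supp_sneg ?snegE ?ZbQ ?Za ?Qa ?sopp_eq0 //; apply: cocircuit_sneg.
exists W => //; split => //.
have := sW a; rewrite snegE Za -Qa => /sign_from0r [Wa0|//].
by rewrite Wa0 eqxx in Wa.
Qed.

Lemma strong_elim0 n : strong_elim0_lt n.
Proof.
elim: n => // n IH P Q a k; rewrite ltnS => szPQ PC QC Pa Qa Pk Qk.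
have Qk' : Q k != sopp (P k) by rewrite Qk eq_sym sopp_eq0.
have [//|[Z [b [[ZC Za Zk sZ] [Pb Qb ZbQ]]]]] := elim_or_escape PC QC Pa Qa Pk Qk'.
have szQZ : #|supp Q :|: supp Z| < n.
  apply: leq_trans szPQ; apply: (card_supp2_lt (x := k)) => //; last by rewrite !inE Pk.
  by rewrite subUset subsetUr (supp_signs_from sZ).
have [W WC [Wb Wa sW]] := elim_escape IH szQZ QC ZC Pa Qa Za Qb ZbQ.
have Wk : W k = Zero by have := sW k; rewrite snegE Qk Zk => /sign_from00.
have szPW := leq_trans (card_supp_escape_lt sZ sW Pb Wb Qb) szPQ.
have [V0 V0C [V0a V0k sV0]] := IH P W a k szPW PC WC Pa Wa Pk Wk.
apply: (elim_repair IH szPQ Pa ZC Za Zk sZ V0C V0a V0k) => x.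
by have := sW x; rewrite snegE => /sign_from_escape; apply.
Qed.

Definition strong_elim_eq_lt n := forall P Q a k,
  #|supp P :|: supp Q| < n -> P \in C -> Q \in C ->
  P a != Zero -> Q a = sopp (P a) -> P k != Zero -> Q k = P k ->
  elim_keeping P Q a k.

Lemma strong_elim_eq n : strong_elim_eq_lt n.
Proof.
elim: n => // n IH P Q a k; rewrite ltnS => szPQ PC QC Pa Qa Pk Qk.
have Qk' : Q k != sopp (P k) by rewrite Qk eq_sym sopp_eq_self.
have [//|[Z [b [[ZC Za Zk sZ] [Pb Qb ZbQ]]]]] := elim_or_escape PC QC Pa Qa Pk Qk'.
have [W WC [Wb Wa sW]] := elim_escape (@strong_elim0 _) (ltnSn _) QC ZC Pa Qa Za Qb ZbQ.
have szPW := leq_trans (card_supp_escape_lt sZ sW Pb Wb Qb) szPQ.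
have [V0 V0C [V0a V0k sV0]] : elim_keeping P W a k.
  have := sW k; rewrite snegE Zk Qk => /sign_from0r [Wk|Wk].
    exact: strong_elim0 (ltnSn _) PC WC Pa Wa Pk Wk.
  exact: IH szPW PC WC Pa Wa Pk Wk.
apply: (elim_repair (@strong_elim0 _) (leqnn _) Pa ZC Za Zk sZ V0C V0a V0k) => x.
by have := sW x; rewrite snegE => /sign_from_escape; apply.
Qed.

Theorem strong_elim P Q a k : P \in C -> Q \in C ->
  P a != Zero -> Q a = sopp (P a) -> P k != Zero -> Q k != sopp (P k) ->
  elim_keeping P Q a k.
Proof.
move=> PC QC Pa Qa Pk /(sign_not_opp Pk) [] Qk.
  exact: strong_elim0 (ltnSn _) PC QC Pa Qa Pk Qk.
exact: strong_elim_eq (ltnSn _) PC QC Pa Qa Pk Qk.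
Qed.

End StrongElimination.

Section Rank.
Variables (E : finType) (C : {set svec E}).
Implicit Types (B : {set E}) (X Y : svec E).

Lemma circuit_orth X Y : X \in circuits C -> Y \in C -> orth X Y.
Proof. by rewrite inE => /and3P [_ /forall_inP orthX _] /orthX. Qed.

Lemma indep0 : indep C set0.
Proof.
apply/forall_inP => X; rewrite inE => /and3P [X0 _ _].
by rewrite subset0 supp_eq0.
Qed.

Lemma indep_setU1 B Y y : indep C B -> Y \in C -> {in B, forall x, Y x = Zero} ->
  Y y != Zero -> indep C (y |: B) /\ y \notin B.
Proof.
move=> iB YC YB Yy; have yB : y \notin B by apply: contra Yy => /YB ->.
split => //; apply/forall_inP => X XC; apply/negP => sXB.
have Xy : X y != Zero.
  apply: contraTneq (forall_inP iB X XC) => Xy; rewrite negbK.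
  apply/subsetP => x xX; move: (subsetP sXB x xX); rewrite in_setU1.
  by case/predU1P => // xy; rewrite xy in_supp Xy eqxx in xX.
have only_y e : smul (X e) (Y e) != Zero -> e = y.
  rewrite smul_neq0 => /andP [Xe Ye]; move: (subsetP sXB e).
  by rewrite in_supp in_setU1 => /(_ Xe) /predU1P [//|eB]; rewrite YB ?eqxx in Ye.
case/orP: (circuit_orth XC YC) => [|/andP [/existsP [e1 /eqP XYe1] /existsP [e2 /eqP XYe2]]].
  by move/eqP/setP/(_ y); rewrite !inE Xy Yy.
have e1y := only_y e1; have e2y := only_y e2.
rewrite XYe1 XYe2 !sign_eqE /= in e1y e2y.
by move: XYe1; rewrite e1y // -(e2y isT) XYe2.
Qed.

Lemma leq_rank (A B : {set E}) : B \subset A -> indep C B -> #|B| <= rank C A.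
Proof.
move=> sBA iB; rewrite /rank.
by apply: (@leq_bigmax_cond _ (fun B => (B \subset A) && indep C B)); rewrite sBA.
Qed.

Lemma rank_witness (A : {set E}) : exists B, [/\ B \subset A, indep C B & #|B| = rank C A].
Proof.
have : 0 < #|[pred B : {set E} | (B \subset A) && indep C B]|.
  by apply/card_gt0P; exists set0; rewrite inE sub0set indep0.
case/(eq_bigmax_cond (fun B : {set E} => #|B|)) => B; rewrite inE => /andP [sBA iB] max_B.
by exists B; rewrite -max_B.
Qed.

Hypothesis C_OM : is_OM C.

Lemma cocircuit_not_vanishing_on_basis B Y :
  indep C B -> #|B| = rank C setT -> Y \in C -> ~ {in B, forall x, Y x = Zero}.
Proof.
move=> iB cB YC YB; have /set0Pn [x] : supp Y != set0.
  by rewrite supp_eq0; case: C_OM => Y0 _ _ _; apply: contraNneq Y0 => <-.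
rewrite in_supp => Yx; have [iBx xB] := indep_setU1 iB YC YB Yx.
by have := leq_rank (subsetT _) iBx; rewrite cardsU1 xB cB ltnn.
Qed.

End Rank.

Section Program.
Variables (E : finType) (f g : E) (C : {set svec E}) (r : nat).
Hypotheses (f_neq_g : f != g) (C_OM : is_OM C) (rankC : rank C setT = r).
Hypothesis del_f_g : forall Y, Y \in del_f f C -> nonneg Y -> Y g != Zero.
Hypothesis del_f_pos : forall e, e \in ground_n f g ->
  exists2 Y, Y \in del_f f C & nonneg Y /\ Y e = Pos.
Hypothesis circuit_f : forall X, X \in circuits C -> f \in supp X -> #|supp X| = r.+1.
Implicit Types (v u B : {set E}) (X Y Z W : svec E).

Lemma in_ground_n x : (x \in ground_n f g) = (x != f) && (x != g).
Proof. by rewrite inE. Qed.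

Lemma restr_f X x : x != f -> restr [set f] X x = X x.
Proof. by rewrite ffunE inE => /negbTE ->. Qed.

Lemma del_f_restr Y : Y \in del_f f C -> exists2 X, X \in C & Y = restr [set f] X.
Proof. by rewrite inE => /andP [/imsetP [X XC ->] _]; exists X. Qed.

Lemma del_f_supp_min Y Y' : Y \in del_f f C -> Y' \in del_f f C ->
  supp Y' \subset supp Y -> supp Y' = supp Y.
Proof.
rewrite inE => /and3P [_ _ /forall_inP minY]; rewrite inE => /and3P [Y'R Y'0 _] sub.
by apply/eqP; have := minY Y' Y'R; rewrite Y'0 sub.
Qed.

Lemma node_sub_ground v : is_node f g C v -> v \subset ground_n f g.
Proof. by case=> Y _ [_ ->]; apply: subsetDl. Qed.

Lemma node_neq_f v x : is_node f g C v -> x \in v -> x != f.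
Proof. by move=> nv /(subsetP (node_sub_ground nv)); rewrite in_ground_n => /andP []. Qed.

Lemma node_antichain v u : is_node f g C v -> is_node f g C u -> v \subset u -> v = u.
Proof.
move=> [Yv Yvdel [Yvnn ->]] [Yu Yudel [_ ->]] sub; congr (_ :\: _).
apply/esym/del_f_supp_min => //; apply/subsetP => x; rewrite !in_supp => Yux.
have [->|xg] := eqVneq x g; first exact: del_f_g Yvdel Yvnn.
have xf : x != f.
  by apply: contraNneq Yux => ->; have [X _ ->] := del_f_restr Yudel; rewrite ffunE inE eqxx.
apply: contraTneq Yux => Yvx.
have : x \in ground_n f g :\: supp Yv by rewrite !inE xf xg Yvx eqxx.
by move/(subsetP sub); rewrite !inE => /andP [YUx _].
Qed.

(* Y^v without the condition Y_f <> 0, which holds as soon as v has a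
   neighbour (node_lift_f). *)
Definition node_lift v Y :=
  [/\ Y \in C, forall x, x != f -> Y x != Neg, Y g != Zero &
      forall x, x \in ground_n f g -> (Y x == Zero) = (x \in v)].

Lemma node_liftP v : is_node f g C v -> exists Y, node_lift v Y.
Proof.
case=> Y Ydel [Ynn ->]; have [X XC eY] := del_f_restr Ydel.
have gf : g != f by rewrite eq_sym.
exists X; split => //.
- by move=> x xf; rewrite -(restr_f X xf) -eY; apply: (forallP Ynn).
- by rewrite -(restr_f X gf) -eY; apply: del_f_g.
- move=> x xg; have xf : x != f by move: xg; rewrite in_ground_n => /andP [].
  by rewrite in_setD xg andbT in_supp negbK -(restr_f X xf) -eY.
Qed.

Lemma node_lift_g v Y : node_lift v Y -> Y g = Pos.
Proof.
case=> _ Ynn Yg _; have := Ynn g; rewrite eq_sym f_neq_g => /(_ isT).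
by move: Yg; rewrite !sign_eqE; case: (Y g).
Qed.

Lemma node_lift_zero v Y : is_node f g C v -> node_lift v Y -> {in v, forall x, Y x = Zero}.
Proof.
move=> nv [_ _ _ Yz] x xv; apply/eqP.
by rewrite Yz ?xv // (subsetP (node_sub_ground nv)).
Qed.

Lemma cocircuit_not_vanishing_node v Y Z : is_node f g C v -> node_lift v Y ->
  Z \in C -> Z f = Zero -> Z g = Zero -> ~ {in v, forall x, Z x = Zero}.
Proof.
move=> nv [YC _ Yg Yz] ZC Zf Zg Zv.
have : supp Z \subset supp Y.
  apply/subsetP => x; rewrite !in_supp => Zx.
  have xg : x \in ground_n f g.
    by rewrite in_ground_n; apply/andP; split; apply: contraNneq Zx => ->; rewrite ?Zf ?Zg eqxx.
  by rewrite Yz //; apply: contra Zx => /Zv ->.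
case/(cocircuit_supp_sub C_OM ZC YC) => eZ; move: Yg.
  by rewrite -eZ Zg eqxx.
by rewrite -sopp_eq0 -snegE -eZ Zg eqxx.
Qed.

(* By (c), no circuit through f lies in f |: B, so f |: B is a basis. *)
Lemma cocircuit_not_vanishing_f B Y : indep C B -> #|B|.+1 = r -> f \notin B ->
  Y \in C -> ~ {in f |: B, forall x, Y x = Zero}.
Proof.
move=> iB cB fB YC YfB; have [ifB|dep] := boolP (indep C (f |: B)).
  by apply: (cocircuit_not_vanishing_on_basis C_OM ifB _ YC YfB); rewrite cardsU1 fB rankC.
have [X XC sXfB] : exists2 X, X \in circuits C & supp X \subset f |: B.
  by case/forall_inPn: dep => X XC /negPn; exists X.
have fX : f \in supp X.
  apply: contraLR (forall_inP iB X XC) => fX; rewrite negbK.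
  apply/subsetP => x xX; move: (subsetP sXfB x xX); rewrite in_setU1.
  by case/predU1P => // xf; rewrite -xf xX in fX.
by have := subset_leq_card sXfB; rewrite circuit_f // cardsU1 fB add1n -cB ltnn.
Qed.

Lemma node_lift_elim_signs v u Yv Yu W : is_node f g C v -> is_node f g C u ->
  node_lift v Yv -> node_lift u Yu -> signs_from Yv (sneg Yu) W ->
  {in u, forall x, W x != Neg} /\ {in v, forall x, W x != Pos}.
Proof.
move=> nv nu lv lu sW; split=> x xU; have := sW x; rewrite snegE.
  move=> /sign_from_nonneg; apply; first by case: lv => _ -> //; apply: node_neq_f xU.
  by rewrite (node_lift_zero nu lu xU) sign_eqE.
move=> /sign_from_opp_nonpos; apply; first by rewrite (node_lift_zero nv lv xU) sign_eqE.
by case: lu => _ -> //; apply: node_neq_f xU.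
Qed.

Section Adjacent.
Hypothesis r_gt1 : 1 < r.
Variables (v u : {set E}) (Yv Yu : svec E).
Hypotheses (nv : is_node f g C v) (nu : is_node f g C u).
Hypothesis rank_vu : rank C (v :&: u) = r - 2.
Hypotheses (lv : node_lift v Yv) (lu : node_lift u Yu).

Lemma adjacent_basis : exists B, [/\ indep C B, #|B|.+2 = r, f \notin B,
  {in B, forall x, Yv x = Zero} & {in B, forall x, Yu x = Zero}].
Proof.
have [B [sB iB cB]] := rank_witness C (v :&: u).
have [sBv sBu] : B \subset v /\ B \subset u by apply/andP; rewrite -subsetI.
exists B; split => //.
- by rewrite cB rank_vu -addn2 subnK.
- by apply/negP => /(subsetP sBv) /(node_neq_f nv); rewrite eqxx.
- by move=> x /(subsetP sBv); apply: node_lift_zero.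
- by move=> x /(subsetP sBu); apply: node_lift_zero.
Qed.

Lemma node_lift_f : v != u -> Yv f != Zero.
Proof.
move=> vu; apply: contra vu => /eqP Yvf.
have [B [iB cB fB YvB YuB]] := adjacent_basis.
case: (lv) (lu) => YvC _ _ _ [YuC _ _ _].
have Yu_v : {in v, forall x, Yu x = Zero}.
  move=> x xv; have [//|Yux] := eqVneq (Yu x) Zero; exfalso.
  have [iBx xB] := indep_setU1 iB YuC YuB Yux.
  apply: (cocircuit_not_vanishing_f iBx _ _ YvC).
  - by rewrite cardsU1 xB.
  - by rewrite in_setU1 negb_or eq_sym (node_neq_f nv xv).
  move=> y; rewrite !in_setU1 => /predU1P [->//|/predU1P [->|/YvB //]].
  exact: node_lift_zero nv lv x xv.
apply/eqP/node_antichain => //; apply/subsetP => x xv.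
case: lu => _ _ _ <-; first by rewrite Yu_v.
exact: subsetP (node_sub_ground nv) x xv.
Qed.

Variable W : svec E.
Hypotheses (WC : W \in C) (Wg : W g = Zero) (sW : signs_from Yv (sneg Yu) W).

Lemma adjacent_elim_f : W f != Zero.
Proof.
apply/eqP => Wf; have [B [iB cB fB YvB YuB]] := adjacent_basis.
case: (lv) => YvC _ Yvg _; have [iBg gB] := indep_setU1 iB YvC YvB Yvg.
apply: (cocircuit_not_vanishing_f iBg _ _ WC).
- by rewrite cardsU1 gB.
- by rewrite in_setU1 negb_or f_neq_g.
move=> x; rewrite !in_setU1 => /predU1P [->//|/predU1P [->//|xB]].
by apply: signs_from_eq0 sW _ _; rewrite ?snegE ?YvB ?YuB.
Qed.

Lemma adjacent_elim_diff e : e \in u :\: v -> W e != Zero.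
Proof.
rewrite in_setD => /andP [ev eu]; apply/eqP => We.
have [B [iB cB fB YvB YuB]] := adjacent_basis.
case: (lv) (lu) => YvC _ _ Yvz [YuC _ Yug _].
have Yve : Yv e != Zero by rewrite Yvz ?(subsetP (node_sub_ground nu)).
have [iBe eB] := indep_setU1 iB YvC YvB Yve.
have YueB : {in e |: B, forall x, Yu x = Zero}.
  by move=> x; rewrite in_setU1 => /predU1P [->|/YuB //]; apply: node_lift_zero nu lu e eu.
have [iBeg geB] := indep_setU1 iBe YuC YueB Yug.
apply: (cocircuit_not_vanishing_on_basis C_OM iBeg _ WC).
  by rewrite rankC !cardsU1 geB eB !add1n.
move=> x; rewrite !in_setU1 => /predU1P [->//|/predU1P [->//|xB]].
by apply: signs_from_eq0 sW _ _; rewrite ?snegE ?YvB ?YuB.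
Qed.

End Adjacent.

(* A cocircuit like Y'' for the pair (v, u); along an arc from v to u, Y''_f = -. *)
Definition arc_cocircuit v u W :=
  [/\ W \in C, W g = Zero, W f = Neg,
      {in u, forall x, W x != Neg} & {in v, forall x, W x != Pos}].

Lemma arc_cond_cocircuit v u : is_node f g C v -> is_node f g C u -> v != u ->
  arc_cond f g C v u -> exists W, arc_cocircuit v u W.
Proof.
move=> nv nu vu [Yv [Yu [Z [iYv iYu [ZC Zg sZ] Zvu]]]].
have lv : node_lift v Yv by case: iYv => *; split.
have lu : node_lift u Yu by case: iYu => *; split.
have {}sZ : signs_from Yv (sneg Yu) Z by move=> x; apply/sign_fromP.
have [Zu Zv] := node_lift_elim_signs nv nu lv lu sZ.
exists Z; split => //.
have /subsetPn [e ev eu] : ~~ (v \subset u) by apply: contra vu => /(node_antichain nv nu) ->.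
have Zf0 : Z f != Zero.
  apply/eqP => Zf; apply: (cocircuit_not_vanishing_node nv lv ZC Zf Zg) => x xv.
  have [xu|xu] := boolP (x \in u); last by rewrite -Zf (Zvu x) // in_setD xu.
  apply: signs_from_eq0 sZ _ _; first exact: node_lift_zero nv lv x xv.
  by rewrite snegE (node_lift_zero nu lu xu).
by move: Zf0 (Zv e ev); rewrite (Zvu e) ?in_setD ?ev ?eu // !sign_eqE; case: (Z e).
Qed.

Lemma not_arc_cond_cocircuit v u : 1 < r -> adjacent f g C r v u ->
  ~ arc_cond f g C u v -> exists W, arc_cocircuit v u W.
Proof.
move=> r1 [nv nu vu rk] not_arc.
have [Yv lv] := node_liftP nv; have [Yu lu] := node_liftP nu.
have rk' : rank C (u :&: v) = r - 2 by rewrite setIC.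
have uv : u != v by rewrite eq_sym.
have Yvf := node_lift_f r1 nv nu rk lv lu vu.
have Yuf := node_lift_f r1 nu nv rk' lu lv uv.
case: (lv) (lu) => YvC _ Yvg _ [YuC _ _ _].
have YvYu : Yv != sneg (sneg Yu).
  rewrite snegK; apply: contraNneq vu => eY.
  suff /(node_antichain nv nu) -> : v \subset u by rewrite eqxx.
  apply/subsetP => x xv; case: lu => _ _ _ <-; last exact: subsetP (node_sub_ground nv) x xv.
  by rewrite -eY (node_lift_zero nv lv xv).
have Yug : sneg Yu g = sopp (Yv g) by rewrite snegE (node_lift_g lu) (node_lift_g lv).
have [W WC [Wg sW]] := weak_elim C_OM YvC (cocircuit_sneg C_OM YuC) YvYu Yvg Yug.
have [Wu Wv] := node_lift_elim_signs nv nu lv lu sW.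
have [e eUV Wfe] : exists2 e, e \in u :\: v & W f != W e.
  apply: NNPP => noe; apply: not_arc; exists Yu, Yv, (sneg W); split.
  - by case: lu => *; split.
  - by case: lv => *; split.
  - split; [exact: cocircuit_sneg | by rewrite snegE Wg |].
    by move=> x; apply/sign_fromP; have := signs_from_sneg sW x; rewrite snegK sign_fromC.
  - move=> x xUV; rewrite !snegE; have [->//|Wfx] := eqVneq (W f) (W x).
    by case: noe; exists x.
have We : W e = Pos.
  move: (eUV); rewrite in_setD => /andP [_ eu].
  move: (adjacent_elim_diff r1 nv nu rk lv lu WC Wg sW eUV) (Wu e eu).
  by rewrite !sign_eqE; case: (W e).
exists W; split => //.
by move: (adjacent_elim_f r1 nv nu rk lv lu WC Wg sW) Wfe; rewrite We !sign_eqE; case: (W f).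
Qed.

Lemma arc_cocircuitP v u : 1 < r -> Defs.arc f g C r v u -> exists W, arc_cocircuit v u W.
Proof.
move=> r1 [[nv nu vu rk] [/(arc_cond_cocircuit nv nu vu) //|]].
exact: not_arc_cond_cocircuit.
Qed.

Lemma pos_cocircuit e : e \in ground_n f g ->
  exists2 X, X \in C & [/\ X e = Pos, X g = Pos & forall x, x != f -> X x != Neg].
Proof.
move=> eg; have [Y Ydel [Ynn Ye]] := del_f_pos eg; have [X XC eY] := del_f_restr Ydel.
have Xnn x : x != f -> X x != Neg by move=> xf; rewrite -(restr_f X xf) -eY; apply: (forallP Ynn).
have gf : g != f by rewrite eq_sym.
have ef : e != f by move: eg; rewrite in_ground_n => /andP [].
exists X => //; split => //; first by rewrite -(restr_f X ef) -eY.
by move: (Xnn g gf) (del_f_g Ydel Ynn); rewrite eY restr_f // !sign_eqE; case: (X g).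
Qed.

Lemma rank_gt1 v e : is_node f g C v -> e \in v -> 1 < r.
Proof.
move=> nv ev; have [X XC [Xe _ _]] := pos_cocircuit (subsetP (node_sub_ground nv) e ev).
have [Y lv] := node_liftP nv; case: (lv) => YC _ Yg _.
have X0 : {in set0, forall x, X x = Zero} by move=> x; rewrite inE.
have Xe0 : X e != Zero by rewrite Xe sign_eqE.
have Ye : {in [set e], forall x, Y x = Zero}.
  by move=> x /set1P ->; apply: node_lift_zero nv lv e ev.
have [ie _] := indep_setU1 (indep0 C) XC X0 Xe0; rewrite setU0 in ie.
have [ieg ge] := indep_setU1 ie YC Ye Yg.
by have := leq_rank (subsetT _) ieg; rewrite rankC cardsU1 ge cards1.
Qed.

Lemma node_pos_cocircuit v e : is_node f g C v -> e \in v ->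
  exists2 Z, Z \in C & [/\ Z g = Zero, Z e = Pos & {in v, forall x, Z x != Neg}].
Proof.
move=> nv ev; have [X XC [Xe Xg Xnn]] := pos_cocircuit (subsetP (node_sub_ground nv) e ev).
have [Y lv] := node_liftP nv; case: (lv) => YC _ _ _.
have Yv := node_lift_zero nv lv.
have [Z ZC [Zg Ze sZ]] : elim_keeping C X (sneg Y) g e.
  apply: (strong_elim C_OM XC (cocircuit_sneg C_OM YC));
    by rewrite ?snegE ?(node_lift_g lv) ?Xg ?Xe ?Yv ?sign_eqE.
have Znn : {in v, forall x, Z x != Neg}.
  move=> x xv; apply: sign_from_nonneg (sZ x) (Xnn x (node_neq_f nv xv)) _.
  by rewrite snegE Yv ?sign_eqE.
exists Z => //; split => //.
by move: Ze (Znn e ev); rewrite !sign_eqE; case: (Z e).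
Qed.

Lemma not_source_cocircuit v : 1 < r -> is_node f g C v -> ~ is_source f g C r v ->
  exists2 W, W \in C & [/\ W g = Zero, W f = Neg & {in v, forall x, W x != Neg}].
Proof.
move=> r1 nv nsrc; have [w awv] : exists w, Defs.arc f g C r w v.
  by apply: NNPP => noarc; apply: nsrc; split => // w awv; apply: noarc; exists w.
by have [W [WC Wg Wf Wv _]] := arc_cocircuitP r1 awv; exists W.
Qed.

Lemma not_sink_cocircuit v : 1 < r -> is_node f g C v -> ~ is_sink f g C r v ->
  exists2 W, W \in C & [/\ W g = Zero, W f = Pos & {in v, forall x, W x != Neg}].
Proof.
move=> r1 nv nsnk; have [w avw] : exists w, Defs.arc f g C r v w.
  by apply: NNPP => noarc; apply: nsnk; split => // w avw; apply: noarc; exists w.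
have [W [WC Wg Wf _ Wv]] := arc_cocircuitP r1 avw.
exists (sneg W); first exact: cocircuit_sneg.
split; rewrite ?snegE ?Wg ?Wf // => x /Wv.
by rewrite snegE !sign_eqE; case: (W x).
Qed.

Lemma node_contraction_cocircuit v e : is_node f g C v ->
  ~ is_source f g C r v -> ~ is_sink f g C r v -> e \in v ->
  exists2 Y, Y \in contraction C [set f; g] & Y e = Pos /\ {in v, forall x, Y x != Neg}.
Proof.
move=> nv nsrc nsnk ev; have r1 := rank_gt1 nv ev.
have [Z ZC [Zg Ze Zv]] := node_pos_cocircuit nv ev.
have in_contr Y : Y \in C -> Y f = Zero -> Y g = Zero -> Y \in contraction C [set f; g].
  move=> YC Yf Yg; rewrite inE YC; apply/forall_inP => x.
  by rewrite !inE => /orP [] /eqP ->; apply/eqP.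
have [Zf|Zf0] := eqVneq (Z f) Zero; first by exists Z; [apply: in_contr | split].
have [W WC [Wg Wf Wv]] : exists2 W, W \in C &
    [/\ W g = Zero, W f = sopp (Z f) & {in v, forall x, W x != Neg}].
  move: Zf0; case: (Z f); rewrite ?eqxx // => _.
    exact: not_source_cocircuit.
  exact: not_sink_cocircuit.
have Ze0 : Z e != Zero by rewrite Ze sign_eqE.
have We : W e != sopp (Z e) by rewrite Ze; apply: Wv.
have [V VC [Vf Ve sV]] := strong_elim C_OM ZC WC Zf0 Wf Ze0 We.
exists V; first by apply: in_contr => //; apply: signs_from_eq0 sV _ _.
have Vnn : {in v, forall x, V x != Neg}.
  by move=> x xv; apply: sign_from_nonneg (sV x) (Zv x xv) (Wv x xv).
split => //; move: Ve (Vnn e ev); rewrite !sign_eqE; by case: (V e).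
Qed.

End Program.

Unset Implicit Arguments.

Theorem lemma5p5 (E : finType) (f g : E) (C : {set svec E}) (r : nat)
    (vt : {set E}) :
  f != g ->
  OM_program f g C r ->
  is_node f g C vt ->
  ~ is_source f g C r vt ->
  ~ is_sink f g C r vt ->
  exists Ye : E -> svec E,
    (forall e, e \in vt ->
       [/\ Ye e \in contraction C [set f; g], Ye e e = Pos &
           forall e', e' \in vt -> Ye e e' != Neg]) /\
    (covector (contraction C [set f; g])
       (foldr (@compose E) (szero E) [seq Ye e | e <- enum vt]) /\
     forall e, e \in vt ->
       foldr (@compose E) (szero E) [seq Ye e | e <- enum vt] e = Pos).
Proof.
move=> fg [C_OM rankC del_f_g del_f_pos circuit_f] nvt nsrc nsnk.
apply: positive_covector => e ev.
exact (node_contraction_cocircuit fg C_OM rankC del_f_g del_f_pos circuit_f nvt nsrc nsnk ev).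
Qed.
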